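(* Let $A$ be a linearly closed proper subset of the abstract linear space $LS^3$. Then $A$ can be topologically embedded in $\mathbb{C}$, i.e. there is a continuous injective map $f:A\to\mathbb{C}$.
   Context: $\mathbb{S}^3$ is the unit sphere of $\mathbb{C}^2$. The abstract linear space $LS^3$ has point set $\mathbb{S}^3$ and abstract lines the sets $L\cap\mathbb{S}^3$ where $L$ is a complex affine line of $\mathbb{C}^2$ meeting $\mathbb{S}^3$ in more than one point; any two distinct points of $\mathbb{S}^3$ lie on exactly one abstract line. A subset $A\subset\mathbb{S}^3$ is linearly closed if for any two distinct $x,y\in A$ the abstract line through $x$ and $y$ is contained in $A$. Proper means $A\neq\mathbb{S}^3$. *)

From Stdlib Require Import Reals.
From Coquelicot Require Import Coquelicot.

(* C^2 as pairs of complex numbers; topology = product topology (= norm topology). *)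
Definition C2 : Type := (C * C)%type.

Definition S3 (p : C2) : Prop :=
  (Cmod (fst p) ^ 2 + Cmod (snd p) ^ 2 = 1)%R.

Definition is_complex_affine_line (L : C2 -> Prop) : Prop :=
  exists (a v : C2), v <> (RtoC 0, RtoC 0) /\
    forall q : C2, L q <->
      exists t : C, q = (Cplus (fst a) (Cmult t (fst v)),
                         Cplus (snd a) (Cmult t (snd v))).

Definition abstract_line (l : C2 -> Prop) : Prop :=
  exists L : C2 -> Prop, is_complex_affine_line L /\
    (exists x y : C2, x <> y /\ L x /\ S3 x /\ L y /\ S3 y) /\
    forall q : C2, l q <-> (L q /\ S3 q).

Definition linearly_closed (A : C2 -> Prop) : Prop :=
  forall x y : C2, A x -> A y -> x <> y ->
    forall l : C2 -> Prop, abstract_line l -> l x -> l y ->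
      forall q : C2, l q -> A q.

From Stdlib Require Import Reals Lra Psatz Classical.
From Coquelicot Require Import Coquelicot.

(* If A lies in a complex affine line, a coordinate projection embeds it.
   Otherwise A contains points x, y and a point off the complex line xy; an
   element of SU(2) moves x to e1 = (1,0).  The abstract lines through e1 are
   the fibres of the slope q2 / (1 - q1), so A contains the fibres over two
   distinct slopes.  Writing the points of S^3 - {e1} as (1 - 1/w, c/w) with
   Re w = (1 + |c|^2)/2, an abstract line missing e1 is the graph of an affine
   map c |-> w = c0 + c1 c; such a line can be chosen through any given point of
   the fibre over b and meeting the fibres over b1, b2, provided b1, b2, b are
   not collinear in R^2.  Hence A contains every fibre, so A = S^3. *)

Section LinearSpace.
Local Open Scope C_scope.

Definition line_pt (a v : C2) (t : C) : C2 := (fst a + t * fst v, snd a + t * snd v).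

Definition on_line (a v p : C2) : Prop := exists t : C, p = line_pt a v t.

Definition c2_sub (p q : C2) : C2 := (fst p - fst q, snd p - snd q).

Definition e1 : C2 := (RtoC 1, RtoC 0).

Lemma S3_coords (p : C2) : S3 p <->
  (fst (fst p) ^ 2 + snd (fst p) ^ 2 + fst (snd p) ^ 2 + snd (snd p) ^ 2 = 1)%R.
Proof. unfold S3. rewrite !Cmod2_alt. unfold Re, Im. split; intros; lra. Qed.

Lemma S3_e1 : S3 e1.
Proof. apply S3_coords. unfold e1, RtoC; simpl. ring. Qed.

Lemma S3_hermitian_norm (x : C2) : S3 x ->
  fst x * Cconj (fst x) + snd x * Cconj (snd x) = 1.
Proof.
intros H. apply S3_coords in H. destruct x as [[a b] [c d]]. simpl in *.
unfold Cplus, Cmult, Cconj, RtoC; simpl. f_equal; nra.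
Qed.

Lemma c2_sub_neq0 (p q : C2) : p <> q -> c2_sub p q <> (RtoC 0, RtoC 0).
Proof.
intros Hpq E. apply Hpq.
assert (E1 : fst p - fst q = 0) by exact (f_equal fst E).
assert (E2 : snd p - snd q = 0) by exact (f_equal snd E).
apply injective_projections.
- transitivity (fst p - fst q + fst q); [ring|]. rewrite E1. ring.
- transitivity (snd p - snd q + snd q); [ring|]. rewrite E2. ring.
Qed.

Lemma complex_affine_line_eq (l m k : C) : l <> 0 \/ m <> 0 ->
  is_complex_affine_line (fun q => l * fst q + m * snd q = k).
Proof.
intros [H|H].
- exists (k / l, RtoC 0), (- m, l). split.
  + intros E. exact (H (f_equal snd E)).
  + intros [q1 q2]; simpl; split.
    * intros E. exists (q2 / l). f_equal.
      -- rewrite <- E. field. exact H.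
      -- field. exact H.
    * intros [t E]. injection E as -> ->. field. exact H.
- exists (RtoC 0, k / m), (m, - l). split.
  + intros E. exact (H (f_equal fst E)).
  + intros [q1 q2]; simpl; split.
    * intros E. exists (q1 / m). f_equal.
      -- field. exact H.
      -- rewrite <- E. field. exact H.
    * intros [t E]. injection E as -> ->. field. exact H.
Qed.

Lemma linearly_closed_eq (A : C2 -> Prop) (l m k : C) (x y : C2) :
  linearly_closed A -> l <> 0 \/ m <> 0 ->
  A x -> A y -> x <> y -> S3 x -> S3 y ->
  l * fst x + m * snd x = k -> l * fst y + m * snd y = k ->
  forall q, S3 q -> l * fst q + m * snd q = k -> A q.
Proof.
intros hlin Hlm Ax Ay Hxy Sx Sy Ex Ey q Sq Eq.
apply (hlin x y Ax Ay Hxy (fun q => l * fst q + m * snd q = k /\ S3 q)); auto.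
exists (fun q => l * fst q + m * snd q = k). split; [|split].
- exact (complex_affine_line_eq l m k Hlm).
- exists x, y. auto.
- intro; tauto.
Qed.

(* The SU(2) matrix with first column x. *)
Definition su2 (x q : C2) : C2 :=
  (fst q * fst x - snd q * Cconj (snd x), fst q * snd x + snd q * Cconj (fst x)).

Definition su2_inv (x r : C2) : C2 :=
  (fst r * Cconj (fst x) + snd r * Cconj (snd x), fst x * snd r - snd x * fst r).

Lemma su2K (x r : C2) : S3 x -> su2 x (su2_inv x r) = r.
Proof.
intros Sx. pose proof (S3_hermitian_norm x Sx) as N.
destruct x as [x1 x2], r as [r1 r2]. simpl in *. unfold su2, su2_inv; simpl.
transitivity (r1 * (x1 * Cconj x1 + x2 * Cconj x2), r2 * (x1 * Cconj x1 + x2 * Cconj x2)).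
- f_equal; ring.
- rewrite N. f_equal; ring.
Qed.

Lemma su2_invK (x q : C2) : S3 x -> su2_inv x (su2 x q) = q.
Proof.
intros Sx. pose proof (S3_hermitian_norm x Sx) as N.
destruct x as [x1 x2], q as [q1 q2]. simpl in *. unfold su2, su2_inv; simpl.
transitivity (q1 * (x1 * Cconj x1 + x2 * Cconj x2), q2 * (x1 * Cconj x1 + x2 * Cconj x2)).
- f_equal; ring.
- rewrite N. f_equal; ring.
Qed.

Lemma su2_inj (x p q : C2) : S3 x -> su2 x p = su2 x q -> p = q.
Proof. intros Sx E. rewrite <- (su2_invK x p), <- (su2_invK x q), E; auto. Qed.

Lemma su2_e1 (x : C2) : su2 x e1 = x.
Proof. unfold su2, e1; simpl. apply injective_projections; simpl; ring. Qed.

Lemma su2_line_pt (x a v : C2) (t : C) :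
  su2 x (line_pt a v t) = line_pt (su2 x a) (su2 x v) t.
Proof. unfold su2, line_pt; simpl. f_equal; ring. Qed.

Lemma su2_sub (x p q : C2) : su2 x (c2_sub p q) = c2_sub (su2 x p) (su2 x q).
Proof. unfold su2, c2_sub; simpl. f_equal; ring. Qed.

Lemma S3_su2 (x q : C2) : S3 x -> (S3 (su2 x q) <-> S3 q).
Proof.
intros Sx. rewrite !S3_coords. apply S3_coords in Sx.
destruct x as [[a b] [c d]], q as [[e f] [g h]]. cbn [fst snd] in *.
unfold su2, Cminus, Cplus, Cmult, Copp, Cconj; cbn [fst snd].
match goal with |- (?L = 1 <-> _)%R =>
  replace L with ((e^2+f^2+g^2+h^2) * (a^2+b^2+c^2+d^2))%R by ring end.
rewrite Sx. split; intros; lra.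
Qed.

Lemma linearly_closed_su2 (A : C2 -> Prop) (x : C2) : S3 x -> linearly_closed A ->
  linearly_closed (fun q => A (su2 x q)).
Proof.
intros Sx hlin p q Ap Aq Hpq l [L [[a [v [Hv HL]]] [[p' [q' [Hpq' [Lp' [Sp' [Lq' Sq']]]]]] Hl]]]
  lp lq r lr.
apply (hlin (su2 x p) (su2 x q) Ap Aq) with (l := fun s => l (su2_inv x s)).
- intro E. exact (Hpq (su2_inj x p q Sx E)).
- exists (fun s => L (su2_inv x s)). split; [|split].
  + exists (su2 x a), (su2 x v). split.
    * intro E. apply Hv. apply (su2_inj x v _ Sx). rewrite E.
      unfold su2; simpl. f_equal; ring.
    * intro s. rewrite HL. split; intros [t Et]; exists t.
      -- rewrite <- (su2K x s Sx). fold (line_pt a v t) in Et. rewrite Et. apply su2_line_pt.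
      -- fold (line_pt (su2 x a) (su2 x v) t) in Et.
         rewrite Et, <- su2_line_pt, su2_invK by exact Sx. reflexivity.
  + exists (su2 x p'), (su2 x q'). rewrite !su2_invK by exact Sx.
    repeat split; auto; try (apply S3_su2; auto).
    intro E. exact (Hpq' (su2_inj x p' q' Sx E)).
  + intro s. rewrite Hl, <- (S3_su2 x (su2_inv x s) Sx), su2K by exact Sx. tauto.
- rewrite su2_invK by exact Sx. exact lp.
- rewrite su2_invK by exact Sx. exact lq.
- rewrite su2_invK by exact Sx. exact lr.
Qed.

Definition slope (q : C2) : C := snd q / (1 - fst q).

Definition contains_fiber (A : C2 -> Prop) (b : C) : Prop :=
  forall r, S3 r -> r <> e1 -> slope r = b -> A r.

Lemma S3_fst_neq1 (r : C2) : S3 r -> r <> e1 -> 1 - fst r <> 0.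
Proof.
intros Sr Hr E. apply Hr. apply S3_coords in Sr.
destruct r as [[a b] [c d]]. unfold Cminus, Cplus, Copp, RtoC in E; cbn [fst snd] in *.
injection E as E1 E2.
assert (a = 1)%R by lra. assert (b = 0)%R by lra. subst a b.
assert (c = 0)%R by nra. assert (d = 0)%R by nra. subst. reflexivity.
Qed.

Lemma contains_fiber_slope (A : C2 -> Prop) (y : C2) :
  linearly_closed A -> A e1 -> A y -> S3 y -> y <> e1 -> contains_fiber A (slope y).
Proof.
intros hlin A1 Ay Sy Hy r Sr Hr Er.
assert (Ny := S3_fst_neq1 y Sy Hy).
assert (Nr := S3_fst_neq1 r Sr Hr).
apply (linearly_closed_eq A (snd y) (1 - fst y) (snd y) e1 y); auto using S3_e1.
- unfold e1; simpl. ring.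
- ring.
- replace (snd r) with (slope y * (1 - fst r)) by (rewrite <- Er; unfold slope; field; exact Nr).
  unfold slope. field. exact Ny.
Qed.

Definition horo_height (c : C) : R := ((1 + fst c ^ 2 + snd c ^ 2) / 2)%R.

Definition horo (c w : C) : C2 := (1 - / w, c / w).

Lemma horo_height_neq0 (c w : C) : fst w = horo_height c -> w <> 0.
Proof.
intros H E. rewrite E in H. unfold horo_height in H; simpl in H.
destruct c as [c d]; simpl in H. nra.
Qed.

Lemma S3_horo (c w : C) : fst w = horo_height c -> S3 (horo c w).
Proof.
intros H. unfold S3. rewrite !Cmod2_alt. destruct w as [p q], c as [c d].
unfold horo, horo_height, Cdiv, Re, Im, Cminus, Cplus, Copp, Cinv, Cmult, RtoC in *;
  cbn [fst snd] in *.
subst p. assert (0 < (1 + c ^ 2 + d ^ 2) / 2)%R by nra. field. nra.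
Qed.

Lemma horo_neq_e1 (c w : C) : w <> 0 -> horo c w <> e1.
Proof.
intros Hw E. apply C1_nz.
transitivity (w * (1 - fst (horo c w))).
- simpl. field. exact Hw.
- rewrite E. simpl. ring.
Qed.

Lemma slope_horo (c w : C) : w <> 0 -> slope (horo c w) = c.
Proof.
intros Hw. unfold slope, horo; simpl.
replace (1 - (1 - / w)) with (/ w) by ring.
field. exact Hw.
Qed.

Lemma horo_slope (r : C2) : S3 r -> r <> e1 -> r = horo (slope r) (/ (1 - fst r)).
Proof.
intros Sr Hr. assert (N := S3_fst_neq1 r Sr Hr).
unfold horo, slope. apply injective_projections; simpl; field; exact N.
Qed.

Lemma horo_eq (c0 c1 c w : C) : w <> 0 -> w = c0 + c1 * c ->
  - c0 * fst (horo c w) + c1 * snd (horo c w) = 1 - c0.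
Proof. intros Hw ->. unfold horo; simpl. field. exact Hw. Qed.

Definition cross (b1 b2 b : C) : R :=
  ((fst b2 - fst b1) * (snd b - snd b1) - (snd b2 - snd b1) * (fst b - fst b1))%R.

Lemma affine_interpolation (b1 b2 b w : C) : cross b1 b2 b <> 0%R ->
  exists c0 c1 : C, w = c0 + c1 * b /\
    fst (c0 + c1 * b1) = horo_height b1 /\ fst (c0 + c1 * b2) = horo_height b2.
Proof.
intros Hc.
destruct b1 as [B1 C1], b2 as [B2 C2], b as [B D], w as [W1 W2].
unfold cross in Hc; cbn [fst snd] in Hc.
set (s1 := (horo_height (B1, C1) - W1)%R). set (s2 := (horo_height (B2, C2) - W1)%R).
set (De := ((B2 - B) * (C1 - D) - (B1 - B) * (C2 - D))%R).
assert (HD : De <> 0%R) by (intro E; apply Hc; unfold De in E; lra).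
set (u := (((C1 - D) * s2 - (C2 - D) * s1) / De)%R).
set (v := (((B1 - B) * s2 - (B2 - B) * s1) / De)%R).
exists ((W1, W2) - (u, v) * (B, D)), (u, v).
unfold Cminus, Cplus, Cmult, Copp; cbn [fst snd].
split; [f_equal; ring|split].
- replace (horo_height (B1, C1)) with (s1 + W1)%R by (unfold s1; ring).
  unfold u, v, De. field. exact HD.
- replace (horo_height (B2, C2)) with (s2 + W1)%R by (unfold s2; ring).
  unfold u, v, De. field. exact HD.
Qed.

Lemma contains_fiber_noncollinear (A : C2 -> Prop) (b1 b2 b : C) :
  linearly_closed A -> cross b1 b2 b <> 0%R ->
  contains_fiber A b1 -> contains_fiber A b2 -> contains_fiber A b.
Proof.
intros hlin Hc F1 F2 r Sr Hr Er.
set (w := / (1 - fst r)).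
assert (Hw : w <> 0).
{ intro E. apply C1_nz. assert (N := S3_fst_neq1 r Sr Hr).
  transitivity (w * (1 - fst r)); [unfold w; field; exact N|]. rewrite E. ring. }
destruct (affine_interpolation b1 b2 b w Hc) as [c0 [c1 [Ew [H1 H2]]]].
set (w1 := c0 + c1 * b1) in *. set (w2 := c0 + c1 * b2) in *.
assert (Hw1 := horo_height_neq0 b1 w1 H1).
assert (Hw2 := horo_height_neq0 b2 w2 H2).
apply (linearly_closed_eq A (- c0) c1 (1 - c0) (horo b1 w1) (horo b2 w2)); auto using S3_horo.
- destruct (classic (c1 = 0)) as [Z1|Z1]; [left|right; exact Z1].
  intro Z0. apply Hw. rewrite Ew, Z1.
  replace c0 with (- - c0) by ring. rewrite Z0. ring.
- apply F1; auto using S3_horo, horo_neq_e1, slope_horo.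
- apply F2; auto using S3_horo, horo_neq_e1, slope_horo.
- intro E. apply Hc.
  rewrite <- (slope_horo b1 w1 Hw1), <- (slope_horo b2 w2 Hw2), E. unfold cross. ring.
- apply horo_eq; auto.
- apply horo_eq; auto.
- rewrite (horo_slope r Sr Hr), Er. apply horo_eq; auto.
Qed.

Definition rot90 (b1 b2 : C) : C :=
  ((fst b1 - (snd b2 - snd b1))%R, (snd b1 + (fst b2 - fst b1))%R).

Lemma sum_sq_eq0 (x y : R) : (x ^ 2 + y ^ 2 = 0)%R -> x = 0%R /\ y = 0%R.
Proof. intros H. split; nra. Qed.

Lemma cross_rot90 (b1 b2 : C) : b1 <> b2 -> cross b1 b2 (rot90 b1 b2) <> 0%R.
Proof.
intros H E. apply H. destruct b1 as [a b], b2 as [c d]. unfold cross, rot90 in E; cbn [fst snd] in E.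
destruct (sum_sq_eq0 (c - a) (d - b)) as [E1 E2]; [rewrite <- E; ring|].
f_equal; lra.
Qed.

Lemma cross_rot90_collinear (b1 b2 b : C) : cross b1 b2 b = 0%R -> b <> b1 -> b1 <> b2 ->
  cross b1 (rot90 b1 b2) b <> 0%R.
Proof.
intros H Hb H12 E. destruct b1 as [a1 a2], b2 as [c1 c2], b as [u v].
unfold cross, rot90 in *; cbn [fst snd] in *.
(* Lagrange's identity: the two crosses vanish only if one of the two vectors does. *)
assert (P : (((c1 - a1) ^ 2 + (c2 - a2) ^ 2) * ((u - a1) ^ 2 + (v - a2) ^ 2) = 0)%R).
{ transitivity (((c1 - a1) * (u - a1) + (c2 - a2) * (v - a2)) ^ 2
                + ((c1 - a1) * (v - a2) - (c2 - a2) * (u - a1)) ^ 2)%R; [ring|].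
  replace ((c1 - a1) * (u - a1) + (c2 - a2) * (v - a2))%R with 0%R by lra.
  replace ((c1 - a1) * (v - a2) - (c2 - a2) * (u - a1))%R with 0%R by lra. ring. }
apply Rmult_integral in P. destruct P as [P|P].
- apply H12. destruct (sum_sq_eq0 _ _ P). f_equal; lra.
- apply Hb. destruct (sum_sq_eq0 _ _ P). f_equal; lra.
Qed.

Lemma S3_sub_of_two_slopes (A : C2 -> Prop) (y z : C2) :
  linearly_closed A -> A e1 -> A y -> A z -> S3 y -> S3 z -> y <> e1 -> z <> e1 ->
  slope y <> slope z -> forall r, S3 r -> A r.
Proof.
intros hlin A1 Ay Az Sy Sz Hy Hz Hyz r Sr.
assert (Fy := contains_fiber_slope A y hlin A1 Ay Sy Hy).
assert (Fz := contains_fiber_slope A z hlin A1 Az Sz Hz).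
assert (F3 : contains_fiber A (rot90 (slope y) (slope z)))
  by exact (contains_fiber_noncollinear A _ _ _ hlin (cross_rot90 _ _ Hyz) Fy Fz).
destruct (classic (r = e1)) as [->|Hr]; [exact A1|].
destruct (classic (cross (slope y) (slope z) (slope r) = 0%R)) as [Hc|Hc].
- destruct (classic (slope r = slope y)) as [Eb|Eb]; [exact (Fy r Sr Hr Eb)|].
  refine (contains_fiber_noncollinear A _ _ _ hlin _ Fy F3 r Sr Hr eq_refl).
  apply cross_rot90_collinear; auto.
- exact (contains_fiber_noncollinear A _ _ _ hlin Hc Fy Fz r Sr Hr eq_refl).
Qed.

Lemma slope_eq_on_line (y z : C2) : S3 y -> S3 z -> y <> e1 -> z <> e1 ->
  slope y = slope z -> on_line e1 (c2_sub y e1) z.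
Proof.
intros Sy Sz Hy Hz E.
assert (Ny := S3_fst_neq1 y Sy Hy). assert (Nz := S3_fst_neq1 z Sz Hz).
exists ((1 - fst z) / (1 - fst y)). unfold line_pt, c2_sub, e1; simpl.
apply injective_projections; simpl.
- field. exact Ny.
- transitivity (slope z * (1 - fst z)); [unfold slope; field; exact Nz|].
  rewrite <- E. unfold slope. field. exact Ny.
Qed.

Lemma S3_sub_of_noncollinear (A : C2 -> Prop) (x y z : C2) :
  (forall p, A p -> S3 p) -> linearly_closed A ->
  A x -> A y -> A z -> y <> x -> ~ on_line x (c2_sub y x) z ->
  forall r, S3 r -> A r.
Proof.
intros hA hlin Ax Ay Az Hyx Hz r Sr.
assert (Sx := hA x Ax).
set (A' := fun q => A (su2 x q)).
set (y' := su2_inv x y). set (z' := su2_inv x z).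
assert (Ay' : A' y') by (unfold A', y'; rewrite su2K; auto).
assert (Az' : A' z') by (unfold A', z'; rewrite su2K; auto).
assert (Sy' : S3 y') by (apply (S3_su2 x y' Sx); unfold y'; rewrite su2K; auto).
assert (Sz' : S3 z') by (apply (S3_su2 x z' Sx); unfold z'; rewrite su2K; auto).
assert (Hy' : y' <> e1).
{ intro E. apply Hyx. rewrite <- (su2K x y Sx). fold y'. rewrite E. apply su2_e1. }
assert (Hz' : z' <> e1).
{ intro E. apply Hz. exists 0. rewrite <- (su2K x z Sx). fold z'. rewrite E, su2_e1.
  unfold line_pt. apply injective_projections; simpl; ring. }
assert (Hyz : slope y' <> slope z').
{ intro E. apply Hz. destruct (slope_eq_on_line y' z' Sy' Sz' Hy' Hz' E) as [t Et].
  exists t. rewrite <- (su2K x z Sx). fold z'.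
  rewrite Et, su2_line_pt, su2_sub, su2_e1. unfold y'. rewrite su2K by exact Sx. reflexivity. }
assert (A1 : A' e1) by (unfold A'; rewrite su2_e1; exact Ax).
rewrite <- (su2K x r Sx).
apply (S3_sub_of_two_slopes A' y' z' (linearly_closed_su2 A x Sx hlin) A1); auto.
apply (S3_su2 x _ Sx). rewrite su2K; auto.
Qed.

Lemma filterlim_fst_within (A : C2 -> Prop) (x : C2) :
  filterlim (@fst C C) (within A (locally x)) (locally (fst x)).
Proof. intros P [e He]. exists e. intros y [Hy _] _. exact (He _ Hy). Qed.

Lemma filterlim_snd_within (A : C2 -> Prop) (x : C2) :
  filterlim (@snd C C) (within A (locally x)) (locally (snd x)).
Proof. intros P [e He]. exists e. intros y [_ Hy] _. exact (He _ Hy). Qed.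

Lemma embedding_of_sub_line (A : C2 -> Prop) (a v : C2) :
  v <> (RtoC 0, RtoC 0) -> (forall p, A p -> on_line a v p) ->
  exists f : C2 -> C,
    (forall x, A x -> filterlim f (within A (locally x)) (locally (f x))) /\
    (forall x y, A x -> A y -> f x = f y -> x = y).
Proof.
intros Hv HA.
destruct (classic (fst v = 0)) as [Z|Z].
- assert (Z2 : snd v <> 0).
  { intro Z2. apply Hv. apply injective_projections; assumption. }
  exists (@snd C C). split; [intros; apply filterlim_snd_within|].
  intros p q Ap Aq E. destruct (HA p Ap) as [t ->], (HA q Aq) as [s ->].
  simpl in E. replace s with t; [reflexivity|].
  transitivity ((snd a + t * snd v - snd a) / snd v); [field; exact Z2|].
  rewrite E. field. exact Z2.
- exists (@fst C C). split; [intros; apply filterlim_fst_within|].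
  intros p q Ap Aq E. destruct (HA p Ap) as [t ->], (HA q Aq) as [s ->].
  simpl in E. replace s with t; [reflexivity|].
  transitivity ((fst a + t * fst v - fst a) / fst v); [field; exact Z|].
  rewrite E. field. exact Z.
Qed.

Lemma noncollinear_of_not_sub_line (A : C2 -> Prop) :
  ~ (exists a v : C2, v <> (RtoC 0, RtoC 0) /\ forall p, A p -> on_line a v p) ->
  exists x y z : C2, A x /\ A y /\ A z /\ y <> x /\ ~ on_line x (c2_sub y x) z.
Proof.
intros Hn.
assert (He1 : e1 <> (RtoC 0, RtoC 0)) by (intro E; exact (C1_nz (f_equal fst E))).
destruct (classic (exists x, A x)) as [[x Ax]|H0];
  [|exfalso; apply Hn; exists e1, e1; split; [exact He1|]; intros p Ap; exfalso; eauto].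
destruct (classic (exists y, A y /\ y <> x)) as [[y [Ay Hyx]]|H1].
- apply NNPP. intro H2. apply Hn. exists x, (c2_sub y x). split; [exact (c2_sub_neq0 y x Hyx)|].
  intros z Az. apply NNPP. intro Hz. apply H2. exists x, y, z. auto.
- exfalso. apply Hn. exists x, e1. split; [exact He1|]. intros p Ap.
  exists 0. destruct (classic (p = x)) as [->|Hpx]; [|exfalso; eauto].
  unfold line_pt. apply injective_projections; simpl; ring.
Qed.

End LinearSpace.

Theorem lemma3p4 (A : C2 -> Prop)
  (hA : forall p : C2, A p -> S3 p)
  (hlin : linearly_closed A)
  (hproper : exists p : C2, S3 p /\ ~ A p) :
  exists f : C2 -> C,
    (forall x : C2, A x -> filterlim f (within A (locally x)) (locally (f x))) /\
    (forall x y : C2, A x -> A y -> f x = f y -> x = y).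
Proof.
destruct (classic (exists a v : C2, v <> (RtoC 0, RtoC 0) /\ forall p, A p -> on_line a v p))
  as [[a [v [Hv HA]]]|Hn].
- exact (embedding_of_sub_line A a v Hv HA).
- exfalso. destruct hproper as [p [Sp Np]]. apply Np.
  destruct (noncollinear_of_not_sub_line A Hn) as [x [y [z [Ax [Ay [Az [Hyx Hz]]]]]]].
  exact (S3_sub_of_noncollinear A x y z hA hlin Ax Ay Az Hyx Hz p Sp).
Qed.
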